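(* Let $L = L_p + \varepsilon L_d \in \mathbb{DH}[t]$ be a line polynomial and $h \in \mathbb{R}[t]$ nonzero. Suppose there is a motion polynomial $C = P + \varepsilon D \in \mathbb{DH}[t]$ satisfying $$P\mathbf{k}\overline{P} = hL_p,\qquad -P\mathbf{k}\overline{D} - D\mathbf{k}\overline{P} = hL_d,\qquad P\overline{D} + D\overline{P} = 0,$$ and let $f \in \mathbb{R}[t]$ be a quadratic polynomial irreducible over $\mathbb{R}$ which divides $h/\gcd(\operatorname{rgcd}(L_p), h)$ and whose multiplicity as a factor of $h$ is one. Then there exists a motion polynomial $\tilde C = \tilde P + \varepsilon\tilde D$ satisfying the same three equations with $h$ replaced by $h/f$.
   Context: $\mathbb{H}$ denotes the real quaternions with units $\mathbf{i},\mathbf{j},\mathbf{k}$ and conjugation $\overline{p_0 + p_1\mathbf{i} + p_2\mathbf{j} + p_3\mathbf{k}} = p_0 - p_1\mathbf{i} - p_2\mathbf{j} - p_3\mathbf{k}$; $\mathbb{DH} = \mathbb{H} + \varepsilon\mathbb{H}$ with $\varepsilon^2=0$, $\varepsilon$ central. $\mathbb{H}[t]$, $\mathbb{DH}[t]$ are polynomial rings in a real indeterminate $t$ commuting with the coefficients; conjugation acts coefficientwise. A motion polynomial is $C = P + \varepsilon D \in \mathbb{DH}[t]$ with $P \ne 0$ and $P\overline{D} + D\overline{P} = 0$. A line polynomial is $L = L_p + \varepsilon L_d \in \mathbb{DH}[t]$ with $L_p, L_d$ vectorial (zero scalar part), $L_p\overline{L_d} + L_d\overline{L_p} = 0$, and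 $L_p \neq 0$. For $A \in \mathbb{H}[t]$, $\operatorname{rgcd}(A)$ is the monic gcd in $\mathbb{R}[t]$ of its four real coefficient polynomials. The three equations are equivalent to $C_\varepsilon\mathbf{k}\overline{C_\varepsilon} = hL$ (with $C_\varepsilon = P - \varepsilon D$) together with the Study condition. *)

From HB Require Import structures.
From mathcomp Require Import all_boot all_order all_algebra.
Set Implicit Arguments. Unset Strict Implicit. Unset Printing Implicit Defensive.
Import Order.TTheory GRing.Theory Num.Theory.
Local Open Scope ring_scope.

(* Quaternions with coefficients in a commutative ring T:
   Quat a0 a1 a2 a3 = a0 + a1 i + a2 j + a3 k.
   With T = {poly R}, quat {poly R} is H[t] (t central). *)
Record quat (T : Type) := Quat { q0 : T; q1 : T; q2 : T; q3 : T }.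

Section QuatOps.
Variable T : comRingType.

Definition qzero : quat T := Quat 0 0 0 0.
Definition qk : quat T := Quat 0 0 0 1.
Definition qadd (a b : quat T) : quat T :=
  Quat (q0 a + q0 b) (q1 a + q1 b) (q2 a + q2 b) (q3 a + q3 b).
Definition qopp (a : quat T) : quat T :=
  Quat (- q0 a) (- q1 a) (- q2 a) (- q3 a).
Definition qscale (c : T) (a : quat T) : quat T :=
  Quat (c * q0 a) (c * q1 a) (c * q2 a) (c * q3 a).
Definition qconj (a : quat T) : quat T :=
  Quat (q0 a) (- q1 a) (- q2 a) (- q3 a).
(* Hamilton product: i^2 = j^2 = k^2 = ijk = -1 *)
Definition qmul (a b : quat T) : quat T :=
  Quat (q0 a * q0 b - q1 a * q1 b - q2 a * q2 b - q3 a * q3 b)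
       (q0 a * q1 b + q1 a * q0 b + q2 a * q3 b - q3 a * q2 b)
       (q0 a * q2 b - q1 a * q3 b + q2 a * q0 b + q3 a * q1 b)
       (q0 a * q3 b + q1 a * q2 b - q2 a * q1 b + q3 a * q0 b).
Definition qvectorial (a : quat T) : Prop := q0 a = 0.
End QuatOps.

Definition hpoly (R : rcfType) := quat {poly R}.

Definition is_motion_poly (R : rcfType) (P D : hpoly R) : Prop :=
  P <> qzero _ /\
  qadd (qmul P (qconj D)) (qmul D (qconj P)) = qzero _.

Definition is_line_poly (R : rcfType) (Lp Ld : hpoly R) : Prop :=
  qvectorial Lp /\ qvectorial Ld /\
  qadd (qmul Lp (qconj Ld)) (qmul Ld (qconj Lp)) = qzero _ /\
  Lp <> qzero _.

Definition rgcd (R : rcfType) (A : hpoly R) : {poly R} :=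
  let g := gcdp (gcdp (gcdp (q0 A) (q1 A)) (q2 A)) (q3 A) in
  (lead_coef g)^-1 *: g.

Definition three_eqs (R : rcfType) (P D Lp Ld : hpoly R) (h : {poly R}) : Prop :=
  qmul (qmul P (qk _)) (qconj P) = qscale h Lp /\
  qopp (qadd (qmul (qmul P (qk _)) (qconj D)) (qmul (qmul D (qk _)) (qconj P)))
    = qscale h Ld /\
  qadd (qmul P (qconj D)) (qmul D (qconj P)) = qzero _.

(* Evaluate at a complex root z of f.  Because f divides h exactly once and
   does not divide Lp, the quaternion P(z) is nonzero and isotropic for
   X |-> X k conj(X); together with the other two equations at z this forces
   P(z) and D(z) to be right-annihilated by 1 + s k for some s with s^2 = -1.
   A real polynomial quaternion Q = u + w k with Q(z) a multiple of 1 + s k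
   therefore makes P Q and D Q divisible by f, and since Q commutes with k and
   Q conj(Q) = u^2 + w^2 is a constant multiple c of f, the pair
   (P Q / f, D Q / f) solves the equations with h / f up to the factor c.  That
   factor is removed by scaling with 1 / sqrt |c| and, when c < 0, by right
   multiplication with i, which reverses the sign of X k conj(Y). *)

From HB Require Import structures.
From mathcomp Require Import all_boot all_order all_algebra.
From mathcomp Require Import ring complex.
Import Order.TTheory GRing.Theory Num.Theory.
Set Implicit Arguments. Unset Strict Implicit. Unset Printing Implicit Defensive.
Local Open Scope ring_scope.

Definition qmul_conj (T : comRingType) (X Y : quat T) := qmul X (qconj Y).
Definition qmul_k_conj (T : comRingType) (X Y : quat T) :=
  qmul (qmul X (qk T)) (qconj Y).
Definition qi (T : comRingType) : quat T := Quat 0 1 0 0.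
Arguments qi {T}.

Ltac quat_ring :=
  rewrite /qmul_conj /qmul_k_conj /qmul /qconj /qscale /qadd /qopp /qk /qi /qzero /=;
  congr Quat; ring.

Section QuatForms.
Variable T : comRingType.
Implicit Types (X Y A B P D Lp Ld : quat T) (a b c d h u w : T).

(* [three_eqs] over any commutative coefficient ring; over [{poly R}] the two
   are convertible. *)
Definition line_eqs P D Lp Ld h : Prop :=
  qmul_k_conj P P = qscale h Lp /\
  qopp (qadd (qmul_k_conj P D) (qmul_k_conj D P)) = qscale h Ld /\
  qadd (qmul_conj P D) (qmul_conj D P) = qzero T.

Lemma qscaleA a b A : qscale a (qscale b A) = qscale (a * b) A.
Proof. by case: A => ????; quat_ring. Qed.
Lemma qscaleD c A B : qscale c (qadd A B) = qadd (qscale c A) (qscale c B).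
Proof. by case: A => ????; case: B => ????; quat_ring. Qed.
Lemma qscaleN c A : qscale c (qopp A) = qopp (qscale c A).
Proof. by case: A => ????; quat_ring. Qed.
Lemma qscale0 c : qscale c (qzero T) = qzero T.
Proof. by quat_ring. Qed.
Lemma qscale0l A : qscale 0 A = qzero T.
Proof. by case: A => ????; quat_ring. Qed.
Lemma qmul_scaler c X Y : qmul X (qscale c Y) = qscale c (qmul X Y).
Proof. by case: X => ????; case: Y => ????; quat_ring. Qed.

Lemma qmul_conj_scale a b X Y :
  qmul_conj (qscale a X) (qscale b Y) = qscale (a * b) (qmul_conj X Y).
Proof. by case: X => ????; case: Y => ????; quat_ring. Qed.
Lemma qmul_k_conj_scale a b X Y :
  qmul_k_conj (qscale a X) (qscale b Y) = qscale (a * b) (qmul_k_conj X Y).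
Proof. by case: X => ????; case: Y => ????; quat_ring. Qed.

Lemma line_eqs_transform (phi : quat T -> quat T) c d P D Lp Ld h :
  (forall X Y, qmul_k_conj (phi X) (phi Y) = qscale c (qmul_k_conj X Y)) ->
  (forall X Y, qmul_conj (phi X) (phi Y) = qscale d (qmul_conj X Y)) ->
  line_eqs P D Lp Ld h -> line_eqs (phi P) (phi D) Lp Ld (c * h).
Proof.
move=> phik phi1 [E1 [E2 E3]]; split; [|split].
- by rewrite phik E1 qscaleA.
- by rewrite !phik -qscaleD -qscaleN E2 qscaleA.
- by rewrite !phi1 -qscaleD E3 qscale0.
Qed.

Lemma line_eqs_scale a P D Lp Ld h :
  line_eqs P D Lp Ld h -> line_eqs (qscale a P) (qscale a D) Lp Ld (a ^+ 2 * h).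
Proof.
rewrite expr2; apply: (line_eqs_transform (phi := qscale a) (d := a * a)) => X Y.
  exact: qmul_k_conj_scale.
exact: qmul_conj_scale.
Qed.

(* [i k conj(i) = -k] and [i conj(i) = 1]. *)
Lemma line_eqs_mulr_i P D Lp Ld h :
  line_eqs P D Lp Ld h -> line_eqs (qmul P qi) (qmul D qi) Lp Ld (- h).
Proof.
rewrite -mulN1r.
apply: (line_eqs_transform (phi := fun X => qmul X qi) (c := -1) (d := 1));
  by move=> -[????] [????]; quat_ring.
Qed.

(* [Q = u + w k] commutes with [k] and [Q conj(Q) = u^2 + w^2]. *)
Lemma line_eqs_mulr_1k u w P D Lp Ld h :
  line_eqs P D Lp Ld h ->
  line_eqs (qmul P (Quat u 0 0 w)) (qmul D (Quat u 0 0 w)) Lp Ld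
           ((u ^+ 2 + w ^+ 2) * h).
Proof.
set Q := Quat u 0 0 w; set n := u ^+ 2 + w ^+ 2.
apply: (line_eqs_transform (phi := fun X => qmul X Q) (c := n) (d := n));
  by move=> -[????] [????]; rewrite /Q /n; quat_ring.
Qed.

End QuatForms.

Section QuatIdomain.
Variable T : idomainType.
Implicit Types (A B P D Lp Ld : quat T) (c h : T).

Lemma qscale_inj c A B : c != 0 -> qscale c A = qscale c B -> A = B.
Proof.
move=> c0; case: A => ????; case: B => ???? [].
by move=> /(mulfI c0) -> /(mulfI c0) -> /(mulfI c0) -> /(mulfI c0) ->.
Qed.

Lemma qscale_eq0 c A : c != 0 -> qscale c A = qzero T -> A = qzero T.
Proof. by move=> c0 cA0; apply: (qscale_inj c0); rewrite cA0 qscale0. Qed.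

Lemma line_eqs_scaleK c P D Lp Ld h : c != 0 ->
  line_eqs (qscale c P) (qscale c D) Lp Ld (c ^+ 2 * h) -> line_eqs P D Lp Ld h.
Proof.
move=> c0 [E1 [E2 E3]]; have c20 : c ^+ 2 != 0 by rewrite expf_neq0.
split; [|split]; apply: (qscale_inj c20).
- by rewrite expr2 -qmul_k_conj_scale E1 qscaleA.
- by rewrite qscaleN qscaleD expr2 -!qmul_k_conj_scale E2 qscaleA.
- by rewrite qscale0 qscaleD expr2 -!qmul_conj_scale E3.
Qed.

Lemma line_eqs_neq0 P D Lp Ld h : h != 0 -> Lp <> qzero T ->
  line_eqs P D Lp Ld h -> P <> qzero T.
Proof.
move=> h0 Lp0 [E1 _] P0; apply: Lp0; apply: (qscale_eq0 h0).
by rewrite -E1 P0; quat_ring.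
Qed.

End QuatIdomain.

Section QuatMap.
Variables (T S : comRingType) (phi : {rmorphism T -> S}).
Implicit Types (X Y P D Lp Ld : quat T).

Definition qmap X := Quat (phi (q0 X)) (phi (q1 X)) (phi (q2 X)) (phi (q3 X)).

Lemma qmap_mul X Y : qmap (qmul X Y) = qmul (qmap X) (qmap Y).
Proof.
by case: X => ????; case: Y => ????; rewrite /qmap /= !(rmorphB, rmorphD, rmorphM).
Qed.
Lemma qmap_conj X : qmap (qconj X) = qconj (qmap X).
Proof. by case: X => ????; rewrite /qmap /= !rmorphN. Qed.
Lemma qmap_add X Y : qmap (qadd X Y) = qadd (qmap X) (qmap Y).
Proof. by case: X => ????; case: Y => ????; rewrite /qmap /= !rmorphD. Qed.
Lemma qmap_opp X : qmap (qopp X) = qopp (qmap X).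
Proof. by case: X => ????; rewrite /qmap /= !rmorphN. Qed.
Lemma qmap_scale c X : qmap (qscale c X) = qscale (phi c) (qmap X).
Proof. by case: X => ????; rewrite /qmap /= !rmorphM. Qed.
Lemma qmap_k : qmap (qk T) = qk S.
Proof. by rewrite /qmap /= rmorph0 rmorph1. Qed.

Lemma line_eqs_map P D Lp Ld h : line_eqs P D Lp Ld h ->
  line_eqs (qmap P) (qmap D) (qmap Lp) (qmap Ld) (phi h).
Proof.
have mapk X Y : qmap (qmul_k_conj X Y) = qmul_k_conj (qmap X) (qmap Y).
  by rewrite /qmul_k_conj !qmap_mul qmap_conj qmap_k.
have map1 X Y : qmap (qmul_conj X Y) = qmul_conj (qmap X) (qmap Y).
  by rewrite /qmul_conj qmap_mul qmap_conj.
move=> [E1 [E2 E3]]; split; [|split].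
- by rewrite -mapk E1 qmap_scale.
- by rewrite -!mapk -qmap_add -qmap_opp E2 qmap_scale.
- by rewrite -!map1 -qmap_add E3 /qmap /= rmorph0.
Qed.

End QuatMap.

Section NullQuaternions.
Variable F : fieldType.
Hypothesis two_neq0 : 2 != 0 :> F.
Implicit Types (a b c d s : F) (p e Lp Ld : quat F).

Lemma mul2f_eq0 a : 2 * a = 0 -> a = 0.
Proof. by move/eqP; rewrite mulf_eq0 (negbTE two_neq0) => /eqP. Qed.

Lemma mulf_eq0_either a b c : a * c = 0 -> b * c = 0 -> a != 0 \/ b != 0 -> c = 0.
Proof.
move=> /eqP ac0 /eqP bc0 [a0|b0]; apply/eqP.
  by move: ac0; rewrite mulf_eq0 (negbTE a0).
by move: bc0; rewrite mulf_eq0 (negbTE b0).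
Qed.

Lemma addr_subr_eq0 a b : a + b = 0 -> a - b = 0 -> a = 0 /\ b = 0.
Proof.
move=> apb amb; split; apply: mul2f_eq0.
  have -> : 2 * a = (a + b) + (a - b) by ring.
  by rewrite apb amb addr0.
have -> : 2 * b = (a + b) - (a - b) by ring.
by rewrite apb amb subr0.
Qed.

(* [p k conj(p) = 0] says [a^2 + d^2 = b^2 + c^2], [ac + bd = 0], [cd = ab]; then
   [(a^2 + d^2)^2 = (ac + bd)^2 + (cd - ab)^2] forces both sums of squares to vanish. *)
Lemma qmul_k_conj_self_eq0 a b c d : Quat a b c d <> qzero F ->
  qmul_k_conj (Quat a b c d) (Quat a b c d) = qzero F ->
  exists2 s, s * s = -1 & c = s * b /\ d = - (s * a).
Proof.
rewrite /qmul_k_conj /qmul /qconj /qk /qzero /= => p0 [_ Ei Ej Ek].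
have acbd : a * c + b * d = 0 by apply: mul2f_eq0; rewrite -Ei; ring.
have cdab : c * d - a * b = 0 by apply: mul2f_eq0; rewrite -Ej; ring.
have ad_bc : a ^+ 2 + d ^+ 2 = b ^+ 2 + c ^+ 2.
  by apply/eqP; rewrite -subr_eq0 -Ek; apply/eqP; ring.
have ad0 : a ^+ 2 + d ^+ 2 = 0.
  apply/eqP; rewrite -sqrf_eq0 expr2 {1}ad_bc.
  have -> : (b ^+ 2 + c ^+ 2) * (a ^+ 2 + d ^+ 2) =
            (a * c + b * d) ^+ 2 + (c * d - a * b) ^+ 2 by ring.
  by rewrite acbd cdab expr0n addr0.
have bc0 : b ^+ 2 + c ^+ 2 = 0 by rewrite -ad_bc.
have [a0|a0] := eqVneq a 0.
  have d0 : d = 0 by apply/eqP; rewrite -sqrf_eq0 -ad0 a0 expr0n add0r.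
  have b0 : b != 0.
    apply: contraPneq p0 => b0.
    have c0 : c = 0 by apply/eqP; rewrite -sqrf_eq0 -bc0 b0 expr0n add0r.
    by rewrite a0 b0 c0 d0.
  exists (c / b); last by rewrite a0 d0 divfK // mulr0 oppr0.
  have -> : c / b * (c / b) = (b ^+ 2 + c ^+ 2) / b ^+ 2 - 1 by field.
  by rewrite bc0 mul0r sub0r.
exists (- d / a).
  have -> : - d / a * (- d / a) = (a ^+ 2 + d ^+ 2) / a ^+ 2 - 1 by field.
  by rewrite ad0 mul0r sub0r.
split; last by field.
apply/eqP; rewrite -subr_eq0; have -> : c - - d / a * b = (a * c + b * d) / a by field.
by rewrite acbd mul0r.
Qed.

(* With [U = e3 + s e0] and [V = e2 - s e1] the equations say
   [aU = bU = aV = bV = 0], while [e (1 + s k)] has coordinates [-sU, sV, V, U]. *)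
Lemma line_eqs_annihilator_param s a b e Lp Ld : s * s = -1 -> a != 0 \/ b != 0 ->
  line_eqs (Quat a b (s * b) (- (s * a))) e Lp Ld 0 -> qmul e (Quat 1 0 0 s) = qzero F.
Proof.
case: e => e0 e1 e2 e3 s2 ab0.
rewrite /line_eqs /qmul_k_conj /qmul_conj /qmul /qconj /qk /qscale /qadd /qopp /qzero.
rewrite /=.
rewrite !mul0r => -[_ [[_ /eqP Ei /eqP Ej /eqP Ek] [E0 _ _ _]]].
move: Ei Ej Ek; rewrite !oppr_eq0 => /eqP Ei /eqP Ej /eqP Ek.
set U := e3 + s * e0; set V := e2 - s * e1.
have K1 : b * U + a * V = 0 by apply: mul2f_eq0; rewrite -Ei /U /V; ring: s2.
have K2 : b * U - a * V = 0.
  by apply: mul2f_eq0; rewrite -(mulr0 (- s)) -Ej /U /V; ring: s2.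
have K3 : a * U + b * V = 0 by apply: mul2f_eq0; rewrite -(mulr0 s) -Ek /U /V; ring: s2.
have K0 : b * V - a * U = 0.
  by apply: mul2f_eq0; rewrite -(mulr0 (- s)) -E0 /U /V; ring: s2.
have [bU aV] := addr_subr_eq0 K1 K2.
have [bV aU] := addr_subr_eq0 (etrans (addrC _ _) K3) K0.
have e3E : e3 = - (s * e0).
  by apply/eqP; rewrite -addr_eq0 -/U (mulf_eq0_either aU bU ab0).
have e2E : e2 = s * e1.
  by apply/eqP; rewrite -subr_eq0 -/V (mulf_eq0_either aV bV ab0).
by rewrite e3E e2E; congr Quat; ring: s2.
Qed.

Lemma line_eqs0_annihilator p e Lp Ld : p <> qzero F -> line_eqs p e Lp Ld 0 ->
  exists2 s, s * s = -1 &
    qmul p (Quat 1 0 0 s) = qzero F /\ qmul e (Quat 1 0 0 s) = qzero F.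
Proof.
case: p => a b c d p0 Ep; have [Epp _] := Ep.
have [s s2 [cE dE]] := qmul_k_conj_self_eq0 p0 (etrans Epp (qscale0l _)).
subst c d; exists s => //; split.
  by rewrite /qmul /qzero /=; congr Quat; ring: s2.
apply: line_eqs_annihilator_param s2 _ Ep.
have [a0|] := eqVneq a 0; [right | by left].
by apply: contraPneq p0 => b0; rewrite a0 b0 !mulr0 oppr0.
Qed.

End NullQuaternions.

Lemma dvdp_size_eq_polyC (F : fieldType) (f g : {poly F}) :
  f != 0 -> f %| g -> size g = size f -> exists2 k, k != 0 & g = k%:P * f.
Proof.
move=> f0 fg sgf; have lf0 : lead_coef f != 0 by rewrite lead_coef_eq0.
have lg0 : lead_coef g != 0 by rewrite lead_coef_eq0 -size_poly_eq0 sgf size_poly_eq0.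
exists (lead_coef g / lead_coef f); first by rewrite mulf_neq0 ?invr_eq0.
have /eqp_eq fgE : f %= g by rewrite -dvdp_size_eqp // sgf.
by rewrite mul_polyC mulrC -scalerA fgE scalerA mulVf // scale1r.
Qed.

Lemma dvdp_divp_gcdp (F : fieldType) (f g h : {poly F}) :
  f %| h %/ gcdp g h -> f %| h.
Proof. by move/dvdp_trans; apply; rewrite divp_dvd // dvdp_gcdr. Qed.

Lemma not_dvdp_gcdp (F : fieldType) (f g h : {poly F}) :
  f %| h %/ gcdp g h -> ~~ (f ^+ 2 %| h) -> ~~ (f %| g).
Proof.
move=> fdiv; apply: contra => fg; have fh := dvdp_divp_gcdp fdiv.
rewrite -(divpK (dvdp_gcdr g h)) expr2 dvdp_mul //.
by rewrite dvdp_gcd fg fh.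
Qed.

Section ComplexEvaluation.
Variable R : rcfType.
Local Open Scope complex_scope.
Implicit Types (f r : {poly R}) (X Y P D Lp Ld : hpoly R).

Lemma real_complex_comm (z : R[i]) : commr_rmorph (real_complex R) z.
Proof. by move=> x; apply: mulrC. Qed.

Local Notation evalC z := (horner_morph (real_complex_comm z)).

Lemma irredp_evalC_root f : irreducible_poly f -> exists z, evalC z f = 0.
Proof.
move=> [sf _]; have /closed_rootP[z fz] : size (map_poly (real_complex R) f) != 1.
  by rewrite size_map_poly neq_ltn sf orbT.
by exists z; apply/eqP.
Qed.

Lemma dvdp_rgcd_qscale f Y : f %| rgcd (qscale f Y).
Proof.
rewrite /rgcd /=; set g := gcdp _ _.
have fg : f %| g by rewrite !dvdp_gcd !dvdp_mulIl.
have [->|lg0] := eqVneq (lead_coef g) 0; first by rewrite invr0 scale0r dvdp0.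
by rewrite dvdpZr ?invr_eq0.
Qed.

Section IrreducibleRoot.
Variables (f : {poly R}) (z : R[i]).
Hypotheses (irr_f : irreducible_poly f) (fz : evalC z f = 0).

Lemma dvdp_evalC r : (f %| r) = (evalC z r == 0).
Proof.
apply/idP/eqP => [/divpK <-|rz]; first by rewrite rmorphM /= fz mulr0.
apply: contraTT (introT eqP rz) => nfr.
rewrite -(irreducible_poly_coprime _ irr_f) -(coprimep_map (real_complex R)) in nfr.
by apply: coprimep_root nfr _; apply/eqP.
Qed.

Lemma qmap_evalC_eq0 X : qmap (evalC z) X = qzero _ -> exists Y, X = qscale f Y.
Proof.
case: X => a b c d [] /eqP az /eqP bz /eqP cz /eqP dz.
exists (Quat (a %/ f) (b %/ f) (c %/ f) (d %/ f)).
by rewrite /qscale /= ![f * _]mulrC !divpK // dvdp_evalC.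
Qed.

Lemma evalC_line_eqs_neq0 P D Lp Ld h1 : ~~ (f %| h1) -> ~~ (f %| rgcd Lp) ->
  line_eqs P D Lp Ld (h1 * f) -> qmap (evalC z) P <> qzero _.
Proof.
move=> nfh1 nfL [E1 _] /qmap_evalC_eq0[P0 PE].
have E : qscale f (qmul_k_conj P0 P0) = qscale h1 Lp.
  apply: (qscale_inj (irredp_neq0 irr_f)).
  by rewrite !qscaleA -qmul_k_conj_scale -PE E1 mulrC.
have h1z : evalC z h1 != 0 by rewrite -dvdp_evalC.
have /qmap_evalC_eq0[L0 LE] : qmap (evalC z) Lp = qzero _.
  by apply: (qscale_eq0 h1z); rewrite -qmap_scale -E qmap_scale /= fz qscale0l.
by move: nfL; rewrite LE dvdp_rgcd_qscale.
Qed.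

End IrreducibleRoot.

Lemma sqrtN1_complex (s : R[i]) :
  s * s = -1 -> exists2 r : R, r * r = 1 & s = 'i * r%:C.
Proof.
move=> s2; have i2 : 'i * 'i = -1 :> R[i] by rewrite -expr2 sqr_i.
have : (s - 'i) * (s + 'i) = 0 by ring: s2 i2.
move/eqP; rewrite mulf_eq0 subr_eq0 addr_eq0 => /orP[]/eqP->.
  by exists 1; rewrite ?mulr1 ?rmorph1.
by exists (-1); rewrite ?mulrNN ?mulr1 ?rmorphN1 ?mulrN1.
Qed.

Lemma real_1k_factor (z s : R[i]) : s * s = -1 ->
  exists u w : {poly R}, exists c,
    [/\ size (u ^+ 2 + w ^+ 2) = 3%N, evalC z (u ^+ 2 + w ^+ 2) = 0
       & qmap (evalC z) (Quat u 0 0 w) = qscale c (Quat 1 0 0 s)].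
Proof.
move=> /sqrtN1_complex[r r2 ->]; set c := 'i * (complex.Im z)%:C.
have i2 : 'i * 'i = -1 :> R[i] by rewrite -expr2 sqr_i.
have r2C : r%:C * r%:C = 1 :> R[i] by rewrite -rmorphM r2 rmorph1.
have uz : evalC z ('X - (complex.Re z)%:P) = c.
  by rewrite rmorphB /= horner_morphX horner_morphC {1}(complexE z) addrC addKr.
have wz : evalC z (- (r * complex.Im z))%:P = c * ('i * r%:C).
  by rewrite horner_morphC rmorphN rmorphM /c; ring: i2.
exists ('X - (complex.Re z)%:P), (- (r * complex.Im z))%:P, c; split.
- rewrite size_polyDl size_exp_XsubC // -rmorphXn size_polyC.
  by case: (_ != 0).
- by rewrite rmorphD !rmorphXn /= uz wz; ring: i2 r2C.
- by rewrite /qmap /= uz wz rmorph0 /qscale /=; congr Quat; ring.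
Qed.

Lemma line_eqs_divp_irr f z P D Lp Ld h1 :
  irreducible_poly f -> evalC z f = 0 -> size f = 3%N -> qmap (evalC z) P <> qzero _ ->
  line_eqs P D Lp Ld (h1 * f) ->
  exists k, exists P1 D1, k != 0 /\ line_eqs P1 D1 Lp Ld (k%:P * h1).
Proof.
move=> irr_f fz sf Pz E; have f0 := irredp_neq0 irr_f.
have E0 : line_eqs (qmap (evalC z) P) (qmap (evalC z) D)
                   (qmap (evalC z) Lp) (qmap (evalC z) Ld) 0.
  by have := line_eqs_map (evalC z) E; rewrite rmorphM /= fz mulr0.
have two_neq0 : 2 != 0 :> R[i] by rewrite pnatr_eq0.
have [s s2 [Ps Ds]] := line_eqs0_annihilator two_neq0 Pz E0.
have [u [w [c [sg gz Qz]]]] := real_1k_factor z s2.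
have divQ X : qmul (qmap (evalC z) X) (Quat 1 0 0 s) = qzero _ ->
    exists Y, qmul X (Quat u 0 0 w) = qscale f Y.
  move=> Xs; apply: (qmap_evalC_eq0 irr_f fz).
  by rewrite qmap_mul Qz qmul_scaler Xs qscale0.
have [P1 PE] := divQ _ Ps; have [D1 DE] := divQ _ Ds.
have [k k0 gE] : exists2 k, k != 0 & u ^+ 2 + w ^+ 2 = k%:P * f.
  by apply: dvdp_size_eq_polyC; rewrite ?(dvdp_evalC irr_f fz) ?gz ?sg ?sf.
exists k, P1, D1; split=> //.
apply: (line_eqs_scaleK f0); rewrite -PE -DE.
have -> : f ^+ 2 * (k%:P * h1) = (u ^+ 2 + w ^+ 2) * (h1 * f) by rewrite gE; ring.
exact: line_eqs_mulr_1k.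
Qed.

End ComplexEvaluation.

Lemma line_eqs_normalize (R : rcfType) (P D Lp Ld : hpoly R) (k : R) (h : {poly R}) :
  k != 0 -> line_eqs P D Lp Ld (k%:P * h) ->
  exists Pt Dt : hpoly R, line_eqs Pt Dt Lp Ld h.
Proof.
move=> k0 E; set s := (Num.sqrt `|k|)^-1.
have s2k : s ^+ 2 * `|k| = 1.
  by rewrite exprVn sqr_sqrtr ?normr_ge0 // mulVf ?normr_eq0.
have := line_eqs_scale s%:P E; rewrite mulrA -rmorphXn -rmorphM /=.
have [kgt0 | kle0] := ltrP 0 k.
  by rewrite -(gtr0_norm kgt0) s2k mul1r => Et; exists (qscale s%:P P), (qscale s%:P D).
rewrite -[k]opprK -(ler0_norm kle0) mulrN s2k rmorphN1 mulN1r => /line_eqs_mulr_i.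
by rewrite opprK => Et; exists (qmul (qscale s%:P P) qi), (qmul (qscale s%:P D) qi).
Qed.

Theorem lemma7 (R : rcfType) (Lp Ld : hpoly R) (h f : {poly R}) (P D : hpoly R) :
  is_line_poly Lp Ld ->
  h != 0 ->
  is_motion_poly P D ->
  three_eqs P D Lp Ld h ->
  size f = 3%N ->
  irreducible_poly f ->
  f %| h %/ gcdp (rgcd Lp) h ->
  ~~ (f ^+ 2 %| h) ->
  exists Pt Dt : hpoly R,
    is_motion_poly Pt Dt /\ three_eqs Pt Dt Lp Ld (h %/ f).
Proof.
move=> [_ [_ [_ Lp0]]] h0 _ E sf irr_f fdiv nf2.
have hE : h = h %/ f * f by rewrite divpK // (dvdp_divp_gcdp fdiv).
have h1_0 : h %/ f != 0 by apply: contra h0 => /eqP h1_0; rewrite hE h1_0 mul0r.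
have nfh1 : ~~ (f %| h %/ f) by apply: contra nf2 => fh1; rewrite hE expr2 dvdp_mul.
have [z fz] := irredp_evalC_root irr_f.
have {}E : line_eqs P D Lp Ld (h %/ f * f) by rewrite -hE.
have Pz := evalC_line_eqs_neq0 irr_f fz nfh1 (not_dvdp_gcdp fdiv nf2) E.
have [k [P1 [D1 [k0 E1]]]] := line_eqs_divp_irr irr_f fz sf Pz E.
have [Pt [Dt Et]] := line_eqs_normalize k0 E1.
exists Pt, Dt; split=> //; split; last by case: Et => _ [].
exact: line_eqs_neq0 h1_0 Lp0 Et.
Qed.
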